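(* Let $k$ be a field, $R=k[x_1,\ldots,x_n]$, and let $I\subset R$ be a strongly stable monomial ideal whose last generator is $M_\omega=x^\omega$ with $\omega=(\omega_1,\ldots,\omega_\mu)\in\mathbb{Z}^\mu_{\ge0}$, $\omega_\mu>0$, where $\mu\ge 2$. Suppose $I$ contains $x_{\mu-1}^t$ for some $t>0$. Then \[ |\mathcal{I}_{\mu-1}|\le \sum_{\alpha\in\mathcal{I}_{\mu-2}} f_{\mu-1}(\alpha), \] with equality if and only if $\omega=(0,\ldots,0,\omega_\mu)$, i.e. $M_\omega=x_\mu^{\omega_\mu}$. In particular $\mathcal{I}_{\mu-1}$ is a finite set.
   Context: Monomial order: degree reverse lexicographic. For monomials $M=x^\alpha$, $N=x^\beta$ in $R$, $M>N$ iff $\deg M>\deg N$, or $\deg M=\deg N$ and for the largest index $s$ with $\alpha_s\ne\beta_s$ one has $\alpha_s<\beta_s$. For $\alpha\in\mathbb{Z}^s_{\ge0}$ ($s\le n$) write $x^\alpha=x_1^{\alpha_1}\cdots x_s^{\alpha_s}$ and $|\alpha|=\sum\alpha_j$; for $\alpha,\beta\in\mathbb{Z}^s_{\ge0}$ set $\alpha\le\beta$ iff $x^\alpha\le x^\beta$. A monomial ideal $I$ is strongly stable if for every monomial $M$, $x_iM\in I$ implies $x_jM\in I$ for all $j<i$. $\mathcal{G}(I)$ denotes the minimal set of monomial generators. For a monomial $M$, $\max M$ is the largest $i$ with $x_i\mid M$. The last generator $M_\omega$ of $I$ is the element of $\mathcal{G}(I)$ of maximal degree which is smallest (in the order) among elements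 of $\mathcal{G}(I)$ of that degree; $\mu=\max M_\omega$. Define $f_1=\min\{t: x_1^t\in I\}$ and, for $2\le i\le\mu$ and $\alpha\in\mathbb{Z}^{i-1}_{\ge0}$, $f_i(\alpha)=\min\{t\ge0: x^\alpha x_i^t\in I\}\in\mathbb{Z}_{\ge0}\cup\{\infty\}$ (minimum of the empty set is $\infty$). For $1\le i\le\mu-2$, $\mathcal{I}_i$ is the set of $(\alpha_1,\ldots,\alpha_i)\in\mathbb{Z}^i_{\ge0}$ with $0\le\alpha_1<f_1$ and $0\le\alpha_j<f_j(\alpha_1,\ldots,\alpha_{j-1})$ for $2\le j\le i$; $\mathcal{I}_{\mu-1}$ is the set of $(\alpha_1,\ldots,\alpha_{\mu-1})\in\mathbb{Z}^{\mu-1}_{\ge0}$ satisfying the same inequalities for $j\le\mu-1$ and additionally $(\alpha_1,\ldots,\alpha_{\mu-1})\ge(\omega_1,\ldots,\omega_{\mu-1})$. Convention: $\mathcal{I}_0$ consists of the empty tuple, on which $f_1$ takes the value $f_1$. *)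

From Stdlib Require Import ClassicalEpsilon.
From mathcomp Require Import all_boot.
Set Implicit Arguments. Unset Strict Implicit. Unset Printing Implicit Defensive.

Section Defs.
Variable n : nat.

(* A monomial x^a of R = k[x_1..x_n] is its exponent vector; variable x_(j+1)
   corresponds to the ordinal j : 'I_n (0-based). *)
Definition mono := {ffun 'I_n -> nat}.

(* exponent of x_(j+1) in a, extended by 0 outside 0..n-1 *)
Definition ev (a : mono) (j : nat) : nat := odflt 0 (omap a (insub j : option 'I_n)).

Definition mdeg (a : mono) : nat := \sum_(j < n) a j.

Definition mdiv (a b : mono) : bool := [forall j, a j <= b j].

Definition mulx (i : 'I_n) (a : mono) : mono := [ffun j => a j + (j == i)].

(* A monomial ideal, represented by its set of monomials (upward closed). *)
Definition monomial_ideal (I : pred mono) : Prop :=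
  forall a b, a \in I -> mdiv a b -> b \in I.

Definition strongly_stable (I : pred mono) : Prop :=
  forall (a : mono) (i j : 'I_n), j < i -> mulx i a \in I -> mulx j a \in I.

Definition min_gen (I : pred mono) (a : mono) : Prop :=
  a \in I /\ forall b, b \in I -> mdiv b a -> b = a.

(* degrevlex on exponent vectors of length m (given as functions on indices
   0..m-1): dgt m a b  <->  x^a > x^b *)
Definition dgt (m : nat) (a b : nat -> nat) : Prop :=
  (\sum_(j < m) b j < \sum_(j < m) a j) \/
  (\sum_(j < m) a j = \sum_(j < m) b j /\
   exists s, [/\ s < m, a s < b s & forall t, s < t < m -> a t = b t]).

Definition dge (m : nat) (a b : nat -> nat) : Prop :=
  (forall j, j < m -> a j = b j) \/ dgt m a b.

Definition last_gen (I : pred mono) (w : mono) : Prop :=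
  [/\ min_gen I w,
      (forall b, min_gen I b -> mdeg b <= mdeg w) &
      (forall b, min_gen I b -> mdeg b = mdeg w -> b <> w -> dgt n (ev b) (ev w))].

(* x^alpha * x_i^t, for alpha in Z^(i-1) (i is 1-based) *)
Definition xmon (alpha : seq nat) (i t : nat) : mono :=
  [ffun j : 'I_n => if j < i.-1 then nth 0 alpha j
                    else if (j : nat) == i.-1 then t else 0].

(* f_i(alpha) = min { t : x^alpha x_i^t in I }, None standing for infinity;
   f 1 [::] is f_1. *)
Definition f (I : pred mono) (i : nat) (alpha : seq nat) : option nat :=
  match excluded_middle_informative (exists t, xmon alpha i t \in I) with
  | left h => Some (ex_minn h)
  | right _ => None
  end.

Definition ltf (x : nat) (o : option nat) : bool :=
  if o is Some v then x < v else true.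

Definition inbox (I : pred mono) (i : nat) (alpha : seq nat) : Prop :=
  size alpha = i /\ forall j, j < i -> ltf (nth 0 alpha j) (f I j.+1 (take j alpha)).

(* calI_i for i <= mu-2 *)
Definition calI (I : pred mono) (i : nat) (alpha : seq nat) : Prop := inbox I i alpha.

Definition calI_last (I : pred mono) (w : mono) (mu : nat) (alpha : seq nat) : Prop :=
  inbox I mu.-1 alpha /\ dge mu.-1 (nth 0 alpha) (ev w).

End Defs.

(* The tuples of [calI_(mu-1)] are those of the full box
   [{ (beta, a) | beta in calI_(mu-2), a < f_(mu-1)(beta) }] that lie above
   [omega] in degrevlex, and that box has exactly [sum_beta f_(mu-1)(beta)]
   elements; all these values are finite because strong stability moves
   [x_(mu-1)^t] to every [x_j^t] with [j <= mu-1].  Since [I] is proper, the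
   zero tuple lies in the box, and it lies above [omega] iff the first [mu-1]
   exponents of [omega] vanish; when they do, every tuple lies above [omega]. *)
From mathcomp Require Import all_boot.
From Stdlib Require Import ClassicalEpsilon.
From mathcomp Require Import zify.
Set Implicit Arguments. Unset Strict Implicit. Unset Printing Implicit Defensive.

Definition propb (P : Prop) : bool :=
  if excluded_middle_informative P then true else false.

Lemma propbP (P : Prop) : propb P <-> P.
Proof. by rewrite /propb; case: excluded_middle_informative => HP; split. Qed.

Lemma sum_eq0_nth k (a : nat -> nat) j :
  \sum_(i < k) a i = 0 -> j < k -> a j = 0.
Proof.
move=> sum0 lt_jk; apply/eqP; rewrite -leqn0 -sum0 (bigD1 (Ordinal lt_jk)) //=.
exact: leq_addr.
Qed.

Lemma dge_zero k (a b : nat -> nat) :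
  (forall j, j < k -> b j = 0) -> dge k a b.
Proof.
move=> b0; have sum_b : \sum_(j < k) b j = 0 by rewrite big1 // => j _; apply: b0.
have [sum_a | sum_a] := posnP (\sum_(j < k) a j).
- by left => j lt_jk; rewrite b0 // (sum_eq0_nth sum_a lt_jk).
- by right; left; rewrite sum_b.
Qed.

Lemma zero_dge k (a b : nat -> nat) :
  (forall j, j < k -> a j = 0) -> dge k a b -> forall j, j < k -> b j = 0.
Proof.
move=> a0; have sum_a : \sum_(j < k) a j = 0 by rewrite big1 // => j _; apply: a0.
case=> [eq_ab | [lt_ab | [eq_sum _]]] j lt_jk.
- by rewrite -eq_ab // a0.
- by move: lt_ab; rewrite sum_a ltn0.
- by apply: (sum_eq0_nth _ lt_jk); rewrite -eq_sum.
Qed.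

Section Box.

Variables (n : nat) (I : pred (mono n)).

Lemma inboxS k alpha :
  inbox I k.+1 alpha <-> exists beta a,
    [/\ alpha = rcons beta a, inbox I k beta & ltf a (f I k.+1 beta)].
Proof.
split.
- case: alpha / lastP => [|beta a] [] //; rewrite size_rcons => -[size_beta] lt_box.
  exists beta, a; split => //.
  + split => // j lt_jk; have := lt_box j (ltnW lt_jk).
    by rewrite nth_rcons size_beta lt_jk -cats1 takel_cat // size_beta ltnW.
  + have := lt_box k (ltnSn k).
    by rewrite nth_rcons size_beta ltnn eqxx -cats1 take_size_cat.
- case=> beta [a [-> [size_beta lt_box] lt_a]].
  split=> [|j]; first by rewrite size_rcons size_beta.
  rewrite ltnS leq_eqVlt => /orP[/eqP-> | lt_jk].
  + by rewrite nth_rcons size_beta ltnn eqxx -cats1 take_size_cat.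
  + rewrite nth_rcons size_beta lt_jk -cats1 takel_cat ?size_beta ?(ltnW lt_jk) //.
    exact: lt_box.
Qed.

Fixpoint box_enum (k : nat) : seq (seq nat) :=
  if k is k'.+1 then
    [seq rcons beta a | beta <- box_enum k', a <- iota 0 (odflt 0 (f I k'.+1 beta))]
  else [:: [::]].

Lemma box_enumP k : (forall j beta, j < k -> f I j.+1 beta <> None) ->
  uniq (box_enum k) /\ forall alpha, alpha \in box_enum k <-> inbox I k alpha.
Proof.
elim: k => [|k IHk] f_fin.
  split=> // alpha; rewrite inE; split=> [/eqP-> | [/size0nil->]] //.
have [uniq_k box_k] := IHk (fun j beta lt_jk => f_fin j beta (ltnW lt_jk)).
split.
- rewrite /=; apply: allpairs_uniq_dep => //; first by move=> beta _; exact: iota_uniq.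
  by move=> [b1 a1] [b2 a2] _ _ /= /rcons_inj [-> ->].
- move=> alpha; rewrite inboxS; split.
  + case/allpairsPdep => beta [a [/box_k beta_in a_in ->]].
    exists beta, a; split => //.
    by move: a_in; rewrite mem_iota add0n; case: (f I k.+1 beta).
  + case=> beta [a [-> /box_k beta_in lt_a]]; apply/allpairsPdep.
    exists beta, a; split => //; rewrite mem_iota add0n.
    by move: lt_a (f_fin k beta (ltnSn k)); case: (f I k.+1 beta).
Qed.

Lemma size_box_enumS k :
  size (box_enum k.+1) = \sum_(beta <- box_enum k) odflt 0 (f I k.+1 beta).
Proof.
rewrite /= size_allpairs_dep sumnE big_map.
by apply: eq_bigr => beta _; rewrite size_iota.
Qed.

Definition mono0 : mono n := [ffun => 0].

Lemma ev_mono0 j : ev mono0 j = 0.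
Proof. by rewrite /ev; case: insub => [i|] //=; rewrite ffunE. Qed.

Lemma last_gen_mono0_notin w j : last_gen I w -> 0 < ev w j -> mono0 \notin I.
Proof.
case=> [[_ w_min] _ _] w_j; apply/negP => mono0_in.
have w_eq : mono0 = w by apply: w_min => //; apply/forallP => i; rewrite ffunE.
by rewrite -w_eq ev_mono0 in w_j.
Qed.

Lemma inbox_nseq0 k : mono0 \notin I -> inbox I k (nseq k 0).
Proof.
move=> mono0_out; split=> [|j lt_jk]; first by rewrite size_nseq.
rewrite nth_nseq lt_jk /f; case: excluded_middle_informative => //= ex_t.
case: ex_minnP => t t_in _; rewrite lt0n; apply: contraTneq t_in => ->.
have -> : xmon n (take j (nseq k 0)) j.+1 0 = mono0.
  by apply/ffunP => x; rewrite !ffunE take_nseq ?(ltnW lt_jk) // nth_nseq; do !case: ifP.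
exact: mono0_out.
Qed.

Lemma inbox_dge_iff k (w : mono n) : mono0 \notin I ->
  (forall alpha, inbox I k alpha -> dge k (nth 0 alpha) (ev w)) <->
  (forall j, j < k -> ev w j = 0).
Proof.
move=> mono0_out; split=> [above | w0 alpha _]; last exact: dge_zero.
apply: zero_dge (above _ (inbox_nseq0 k mono0_out)) => j lt_jk.
by rewrite nth_nseq lt_jk.
Qed.

Definition mulxn (i : 'I_n) (k : nat) (b : mono n) : mono n :=
  [ffun x => b x + (x == i) * k].

Lemma mulxnS i k b : mulxn i k.+1 b = mulx i (mulxn i k b).
Proof. by apply/ffunP => x; rewrite !ffunE; case: (x == i) => /=; lia. Qed.

Lemma mulxn_mulx i j k b : mulx j (mulxn i k b) = mulxn i k (mulx j b).
Proof. by apply/ffunP => x; rewrite !ffunE; case: (x == i); case: (x == j) => /=; lia. Qed.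

Lemma strongly_stable_mulxn (i j : 'I_n) k b : strongly_stable I -> j < i ->
  mulxn i k b \in I -> mulxn j k b \in I.
Proof.
move=> stableI lt_ji; elim: k b => [|k IHk] b.
  suff mulxn0 l : mulxn l 0 b = b by rewrite !mulxn0.
  by apply/ffunP => x; rewrite ffunE muln0 addn0.
rewrite !mulxnS => in_i; rewrite mulxn_mulx; apply: IHk; rewrite -mulxn_mulx.
exact: stableI lt_ji in_i.
Qed.

Lemma xmon_in_ideal m t beta j : monomial_ideal I -> strongly_stable I -> m < n ->
  xmon n (nseq m 0) m.+1 t \in I -> j <= m -> xmon n beta j.+1 t \in I.
Proof.
move=> idealI stableI lt_mn xt_in le_jm.
pose im : 'I_n := Ordinal lt_mn; pose ij : 'I_n := Ordinal (leq_ltn_trans le_jm lt_mn).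
have xm_in : mulxn im t mono0 \in I.
  congr (_ \in I): xt_in; apply/ffunP => x; rewrite !ffunE -val_eqE /=.
  by case: ltngtP => lt_xm; rewrite ?nth_nseq ?lt_xm ?mul0n ?mul1n.
have xj_in : mulxn ij t mono0 \in I.
  have [lt_jm | ge_jm] := ltnP j m.
    exact: (strongly_stable_mulxn (i:=im) (j:=ij) stableI lt_jm xm_in).
  by rewrite (_ : ij = im) //; apply/val_inj/eqP; rewrite /= eqn_leq le_jm ge_jm.
apply: idealI xj_in _; apply/forallP => x; rewrite !ffunE -val_eqE /=.
by case: eqP => [->|_]; rewrite ?ltnn ?mul1n ?mul0n.
Qed.

Lemma f_finite m t beta j : monomial_ideal I -> strongly_stable I -> m < n ->
  xmon n (nseq m 0) m.+1 t \in I -> j <= m -> f I j.+1 beta <> None.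
Proof.
move=> idealI stableI lt_mn xt_in le_jm; rewrite /f.
case: excluded_middle_informative => // -[]; exists t.
exact: xmon_in_ideal xt_in le_jm.
Qed.

End Box.

Theorem lemma2p5 (n : nat) (I : pred (mono n)) (w : mono n) (mu : nat) :
  monomial_ideal I -> strongly_stable I ->
  last_gen I w ->
  2 <= mu <= n -> 0 < ev w mu.-1 -> (forall j, mu <= j -> ev w j = 0) ->
  (exists t, 0 < t /\ xmon n (nseq (mu - 2) 0) mu.-1 t \in I) ->
  exists s1 s2 : seq (seq nat),
    [/\ uniq s1 /\ (forall alpha, alpha \in s1 <-> calI_last I w mu alpha),
        uniq s2 /\ (forall alpha, alpha \in s2 <-> calI I (mu - 2) alpha),
        (forall alpha, alpha \in s2 -> f I mu.-1 alpha <> None),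
        size s1 <= \sum_(alpha <- s2) odflt 0 (f I mu.-1 alpha) &
        (size s1 = \sum_(alpha <- s2) odflt 0 (f I mu.-1 alpha) <->
         forall j, j < mu.-1 -> ev w j = 0)].
Proof.
move=> idealI stableI last_w /andP[mu_ge2 mu_le_n] w_mu _ [t [_ xt_in]].
case: mu mu_ge2 mu_le_n w_mu xt_in => [|[|m]] // _ lt_m1n w_mu xt_in.
rewrite !subSS subn0 /= in xt_in *.
have f_fin j beta : j < m.+1 -> f I j.+1 beta <> None.
  exact: f_finite idealI stableI (ltnW lt_m1n) xt_in.
have [uniq_m box_m] := box_enumP (fun j beta lt_jm => f_fin j beta (ltnW lt_jm)).
have [uniq_m1 box_m1] := box_enumP f_fin.
have mono0_out := last_gen_mono0_notin last_w w_mu.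
pose above_w alpha := propb (dge m.+1 (nth 0 alpha) (ev w)).
exists (filter above_w (box_enum I m.+1)), (box_enum I m).
rewrite size_filter -size_box_enumS; split.
- split=> [|alpha]; first exact: filter_uniq.
  rewrite mem_filter; split=> [/andP[/propbP above /box_m1] | [/box_m1 in_box above]] //.
  by rewrite in_box andbT; apply/propbP.
- by split.
- by move=> alpha _; apply: f_fin.
- exact: count_size.
- rewrite -(inbox_dge_iff _ w mono0_out); split.
  + by move/eqP; rewrite -all_count => /allP above alpha /box_m1 /above /propbP.
  + move=> above; apply/eqP; rewrite -all_count; apply/allP => alpha /box_m1.
    by move/above/propbP.
Qed.
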